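(* Let $(T,X)$ be a flow, where $T$ is a Hausdorff topological group and $X$ is a Hausdorff uniform space which is a Baire space. If $(T,X)$ is thickly stable and $x\in X$ is a regularly a.p. point, then $(T,\overline{Tx})$ is a pointwise regularly a.p. and equicontinuous subflow of $(T,X)$ (i.e. every point of $\overline{Tx}$ is a regularly a.p. point, and $(T,\overline{Tx})$ is equicontinuous).
   Context: $\mathscr U_X$ is a compatible symmetric uniformity of $X$; $\varepsilon[A]=\{y:\exists a\in A,(a,y)\in\varepsilon\}$. $S\subseteq T$ is (right) thick if for every compact $K\subseteq T$ there is $t$ with $Kt\subseteq S$; $A\subseteq T$ is (right) syndetic if there is compact $K$ with $Kt\cap A\neq\emptyset$ for all $t\in T$. A flow is thickly stable if for every $\varepsilon\in\mathscr U_X$ and $x\in X$ there exist $\delta\in\mathscr U_X$ and a thick $S\subseteq T$ with $s(\delta[x])\subseteq\varepsilon[sx]$ for all $s\in S$. A point $x$ is regularly a.p. if for every neighborhood $U$ of $x$ the set $\{t\in T: tx\in U\}$ contains a syndetic normal closed subgroup of $T$. A flow $(T,Z)$ is equicontinuous if for every $\varepsilon$ and $z\in Z$ there is $\delta$ with $t(\delta[z])\subseteq\varepsilon[tz]$ for all $t\in T$. *)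

From HB Require Import structures.
From mathcomp Require Import all_boot all_order.
From mathcomp Require Import all_classical all_reals all_analysis.
Set Implicit Arguments. Unset Strict Implicit. Unset Printing Implicit Defensive.
Local Open Scope classical_set_scope.

Record topGroup (T : topologicalType) := TopGroup {
  tg_mul : T -> T -> T;
  tg_inv : T -> T;
  tg_one : T;
  tg_mulA : forall a b c, tg_mul a (tg_mul b c) = tg_mul (tg_mul a b) c;
  tg_mul1g : forall a, tg_mul tg_one a = a;
  tg_mulVg : forall a, tg_mul (tg_inv a) a = tg_one;
  tg_mul_cont : continuous (fun p : T * T => tg_mul p.1 p.2);
  tg_inv_cont : continuous tg_inv }.

Definition is_flow (T : topologicalType) (G : topGroup T) (X : topologicalType)
  (act : T -> X -> X) : Prop :=
  [/\ forall x, act (tg_one G) x = x,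
      forall s t x, act (tg_mul G s t) x = act s (act t x)
    & continuous (fun p : T * X => act p.1 p.2)].

Definition baire_space (X : topologicalType) : Prop :=
  forall F : nat -> set X, (forall n, open (F n) /\ dense (F n)) ->
    dense (\bigcap_n F n).

Definition symm_entourage (X : uniformType) (E : set (X * X)) : Prop :=
  entourage E /\ (forall a b, E (a, b) -> E (b, a)).

Definition ent_img (X : Type) (E : set (X * X)) (A : set X) : set X :=
  [set y | exists2 a, A a & E (a, y)].

Definition rtrans (T : topologicalType) (G : topGroup T) (K : set T) (t : T) : set T :=
  [set tg_mul G k t | k in K].

Definition thick (T : topologicalType) (G : topGroup T) (S : set T) : Prop :=
  forall K : set T, compact K -> exists t, rtrans G K t `<=` S.

Definition syndetic (T : topologicalType) (G : topGroup T) (A : set T) : Prop :=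
  exists2 K : set T, compact K & forall t, rtrans G K t `&` A !=set0.

Definition thickly_stable (T : topologicalType) (G : topGroup T) (X : uniformType)
  (act : T -> X -> X) : Prop :=
  forall eps, symm_entourage eps -> forall x : X,
    exists2 delta, symm_entourage delta &
      exists2 S : set T, thick G S &
        forall s, S s -> act s @` ent_img delta [set x] `<=` ent_img eps [set act s x].

Definition normal_closed_subgroup (T : topologicalType) (G : topGroup T) (H : set T) : Prop :=
  [/\ H (tg_one G),
      forall a b, H a -> H b -> H (tg_mul G a b),
      forall a, H a -> H (tg_inv G a),
      forall g h, H h -> H (tg_mul G (tg_mul G g h) (tg_inv G g))
    & closed H].

Definition regularly_ap (T : topologicalType) (G : topGroup T) (X : topologicalType)
  (act : T -> X -> X) (x : X) : Prop :=
  forall U : set X, nbhs x U ->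
    exists H : set T, [/\ normal_closed_subgroup G H, syndetic G H &
                          H `<=` [set t | U (act t x)]].

Definition orbit_closure (T : topologicalType) (X : topologicalType)
  (act : T -> X -> X) (x : X) : set X :=
  closure (range (fun t => act t x)).

(* Equicontinuity of the subflow (T, Y), Y with the subspace uniformity
   (entourages of Y = traces on Y x Y of entourages of X). *)
Definition equicontinuous_on (T : topologicalType) (X : uniformType)
  (act : T -> X -> X) (Y : set X) : Prop :=
  forall eps, symm_entourage eps -> forall z, Y z ->
    exists2 delta, symm_entourage delta &
      forall t, act t @` (ent_img delta [set z] `&` Y) `<=` ent_img eps [set act t z].

From mathcomp Require Import all_boot all_order.
From mathcomp Require Import all_classical all_reals all_analysis.
Local Open Scope classical_set_scope.

(* Fix a small symmetric entourage D.  Write t = g s with g in a syndetic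
   normal subgroup H returning x into delta[x], and s in the thick set S on
   which delta[x] is mapped into D[s x].  For c in H the conjugate s^-1 c s
   lies in H, so c (s x) = s (s^-1 c s x) is D-close to s x.  Hence every
   point of the orbit of x is moved by at most D o D by elements of H; by
   continuity this persists on the orbit closure.  This uniform recurrence
   gives regular almost periodicity of every point of the orbit closure, and,
   combined once more with thick stability at a point z, equicontinuity:
   t z = g s z, t w = g s w, and s z, s w are D-close for w in delta[z]. *)

Section TopGroupTheory.
Context {T : topologicalType} {G : topGroup T}.
Local Notation mul := (tg_mul G).
Local Notation inv := (tg_inv G).
Local Notation one := (tg_one G).
Local Notation mulgA := (tg_mulA G).
Local Notation mul1g := (tg_mul1g G).
Local Notation mulVg := (tg_mulVg G).

Lemma tg_mulgV a : mul a (inv a) = one.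
Proof.
rewrite -[mul a (inv a)]mul1g -(mulVg (inv a)) -mulgA.
by rewrite [mul (inv a) _]mulgA mulVg mul1g mulVg.
Qed.

Lemma tg_mulg1 a : mul a one = a.
Proof. by rewrite -(mulVg a) mulgA tg_mulgV mul1g. Qed.

Lemma tg_invgK a : inv (inv a) = a.
Proof. by rewrite -[inv (inv a)]tg_mulg1 -(mulVg a) mulgA mulVg mul1g. Qed.

Lemma tg_mul_conjV s c : mul s (mul (mul (inv s) c) (inv (inv s))) = mul c s.
Proof. by rewrite tg_invgK !mulgA tg_mulgV mul1g. Qed.

Lemma syndetic_mul_thick {H S : set T} : syndetic G H -> thick G S ->
  (forall a, H a -> H (inv a)) ->
  forall t, exists g s, [/\ H g, S s & t = mul g s].
Proof.
move=> [K cK HK] /(_ K cK) [u Ku] HV t.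
have [_ [[k Kk <-] Hkut]] := HK (mul u (inv t)).
exists (inv (mul k (mul u (inv t)))), (mul k u); split; first exact: HV.
  by apply: Ku; exists k.
have -> : mul k u = mul (mul k (mul u (inv t))) t.
  by rewrite -!mulgA mulVg tg_mulg1.
by rewrite mulgA mulVg mul1g.
Qed.

End TopGroupTheory.

Lemma ent_img_set1 (X : Type) (E : set (X * X)) a :
  ent_img E [set a] = xsection E a.
Proof.
by rewrite predeqE => y; split=> [[_ -> ?]|/xsectionP ?]; [apply/xsectionP|exists a].
Qed.

Lemma entourage_split4 {X : uniformType} {E : set (X * X)} : entourage E ->
  exists2 D, symm_entourage D &
    forall a b c d e, D (a, b) -> D (b, c) -> D (c, d) -> D (d, e) -> E (a, e).
Proof.
move=> eE; have eE2 := entourage_split_ent eE.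
exists (split_ent (split_ent E) `&` (split_ent (split_ent E))^-1)%relation.
  by split=> [|a b [? ?]]; [exact: entourage_invI|split].
move=> a b c d e [Dab _] [Dbc _] [Dcd _] [Dde _].
by apply: (entourage_split c) => //; [apply: (entourage_split b)|apply: (entourage_split d)].
Qed.

Section Flow.
Context {T : topologicalType} {G : topGroup T} {X : uniformType}.
Context {act : T -> X -> X}.
Hypothesis flowP : is_flow G act.

Lemma flow_act_continuous t : continuous (act t).
Proof.
case: flowP => _ _ actc y.
have -> : act t = (fun p : T * X => act p.1 p.2) \o (fun z => (t, z)) by [].
apply: continuous_comp; last exact: actc.
by apply: cvg_pair; [exact: cvg_cst | exact: cvg_id].
Qed.

Lemma orbit_closure_invariant x t y :
  orbit_closure act x y -> orbit_closure act x (act t y).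
Proof.
case: flowP => _ actM _ Yy B /(flow_act_continuous t y) /Yy [_ [[s _ <-] Bsx]].
by exists (act t (act s x)); split=> //; exists (tg_mul G t s); rewrite ?actM.
Qed.

Lemma thick_stable_conj_displacement {D delta : set (X * X)} {S H : set T} {x} :
  (forall s, S s -> act s @` ent_img delta [set x] `<=` ent_img D [set act s x]) ->
  (forall g h, H h -> H (tg_mul G (tg_mul G g h) (tg_inv G g))) ->
  H `<=` [set c | ent_img delta [set x] (act c x)] ->
  forall s, S s -> forall c, H c -> D (act s x, act c (act s x)).
Proof.
move=> stabS HN Hret s Ss c Hc.
have /Hret Hconj := HN (tg_inv G s) c Hc.
have /= := stabS s Ss _ (ex_intro2 _ _ (act _ x) Hconj erefl).
case: flowP => _ actM _.
by rewrite -actM tg_mul_conjV actM ent_img_set1 => /xsectionP.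
Qed.

Lemma orbit_closure_uniformly_recurrent {x} :
  thickly_stable G act -> regularly_ap G act x ->
  forall E, entourage E -> exists H, [/\ normal_closed_subgroup G H, syndetic G H &
    forall w b, orbit_closure act x w -> H b -> E (w, act b w)].
Proof.
move=> stab xrap E eE.
have [D [eD sD] chain] := entourage_split4 eE.
have [delta [edelta _] [S thS stabS]] := stab D (conj eD sD) x.
have := nbhs_entourage x edelta; rewrite -ent_img_set1.
move=> /xrap [H [nH Hsyn Hret]]; have [_ HM HV HN _] := nH.
exists H; split=> // w b Yw Hb.
have orbit_rec t : exists m, D (act t x, m) /\ D (m, act b (act t x)).
  have [g [s [Hg Ss ->]]] := syndetic_mul_thick Hsyn thS HV t.
  have disp := thick_stable_conj_displacement stabS HN Hret s Ss.
  case: flowP => _ actM _.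
  exists (act s x); rewrite actM; split; first exact/sD/disp.
  by rewrite -actM; apply/disp/HM.
have nbw : nbhs w (xsection D w `&` act b @^-1` xsection D (act b w)).
  apply: filterI; first exact: nbhs_entourage.
  exact/flow_act_continuous/nbhs_entourage.
have [_ [[t _ <-] [/xsectionP Dwt /xsectionP Dbt]]] := Yw _ nbw.
have [m [Dtm Dmb]] := orbit_rec t.
exact: chain Dwt Dtm Dmb (sD _ _ Dbt).
Qed.

Lemma orbit_closure_regularly_ap {x y} :
  thickly_stable G act -> regularly_ap G act x ->
  orbit_closure act x y -> regularly_ap G act y.
Proof.
move=> stab xrap Yy U /nbhsP [E eE EU].
have [H [nH sH rec]] := orbit_closure_uniformly_recurrent stab xrap _ eE.
by exists H; split=> // t Ht; apply/EU/xsectionP/rec.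
Qed.

Lemma orbit_closure_equicontinuous {x} :
  thickly_stable G act -> regularly_ap G act x ->
  equicontinuous_on act (orbit_closure act x).
Proof.
move=> stab xrap eps [eeps _] z Yz.
have [D [eD sD] chain] := entourage_split4 eeps.
have [H [[_ _ HV _ _] Hsyn rec]] := orbit_closure_uniformly_recurrent stab xrap _ eD.
have [delta sdelta [S thS stabS]] := stab D (conj eD sD) z.
exists delta => // t _ [w [dzw Yw] <-].
have [g [s [Hg Ss ->]]] := syndetic_mul_thick Hsyn thS HV t.
have := stabS s Ss _ (ex_intro2 _ _ w dzw erefl).
case: flowP => _ actM _.
rewrite !ent_img_set1 !actM => /xsectionP Dsw; apply/xsectionP.
apply: (chain _ (act s z) (act s w) (act g (act s w))) => //.
- by apply/sD/rec => //; apply: orbit_closure_invariant.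
- by apply: rec => //; apply: orbit_closure_invariant.
- exact: entourage_refl.
Qed.

End Flow.

Theorem theorem2p6 (T : topologicalType) (G : topGroup T) (X : uniformType)
  (act : T -> X -> X) (x : X) :
  hausdorff_space T -> hausdorff_space X -> baire_space X ->
  is_flow G act -> thickly_stable G act -> regularly_ap G act x ->
  [/\ forall t y, orbit_closure act x y -> orbit_closure act x (act t y),
      forall y, orbit_closure act x y -> regularly_ap G act y
    & equicontinuous_on act (orbit_closure act x)].
Proof.
move=> _ _ _ flowP stab xrap; split=> [t y|y Yy|].
- exact: orbit_closure_invariant flowP x t y.
- exact (orbit_closure_regularly_ap flowP stab xrap Yy).
- exact (orbit_closure_equicontinuous flowP stab xrap).
Qed.
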